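(* Let $v>0$ and consider the system $$\partial_\xi a=r,\qquad \partial_\xi r=-vr-\frac{sa}{2}+\frac{a|r|}{2},\qquad \partial_\xi s=-vs-ra,$$ and the sets $I_1=\{r>0,\ s=2r\}$, $I_2=\{r>0,\ s=-r\}$, $I_3=\{r<0,\ s=r\}$, $I_4=\{r<0,\ s=-2r\}$ in $\mathbb{R}^3$. Consider the condition (H) $(a,r,s)(-\infty)=(a_0,0,0)$ and $(a,r,s)(+\infty)=(0,0,0)$. (i) There is a unique $a_0\in\mathbb{R}$ for which there exists a solution contained in $I_1$ satisfying (H); moreover $a_0=-4v$. (ii) There is a unique $a_0\in\mathbb{R}$ for which there exists a solution contained in $I_4$ satisfying (H); moreover $a_0=4v$. (iii) There is no solution contained in $I_2$ or in $I_3$ satisfying (H). *)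

From Stdlib Require Import Reals.
From Coquelicot Require Import Coquelicot.
Open Scope R_scope.

Definition is_solution (v : R) (a r s : R -> R) : Prop :=
  forall xi : R,
    is_derive a xi (r xi) /\
    is_derive r xi (- v * r xi - s xi * a xi / 2 + a xi * Rabs (r xi) / 2) /\
    is_derive s xi (- v * s xi - r xi * a xi).

Definition I1 (a r s : R) : Prop := 0 < r /\ s = 2 * r.
Definition I2 (a r s : R) : Prop := 0 < r /\ s = - r.
Definition I3 (a r s : R) : Prop := r < 0 /\ s = r.
Definition I4 (a r s : R) : Prop := r < 0 /\ s = - 2 * r.

Definition contained_in (I : R -> R -> R -> Prop) (a r s : R -> R) : Prop :=
  forall xi : R, I (a xi) (r xi) (s xi).

Definition cond_H (a0 : R) (a r s : R -> R) : Prop :=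
  is_lim a m_infty (Finite a0) /\ is_lim r m_infty (Finite 0) /\
  is_lim s m_infty (Finite 0) /\
  is_lim a p_infty (Finite 0) /\ is_lim r p_infty (Finite 0) /\
  is_lim s p_infty (Finite 0).

Definition admits_solution (v : R) (I : R -> R -> R -> Prop) (a0 : R) : Prop :=
  exists a r s : R -> R,
    is_solution v a r s /\ contained_in I a r s /\ cond_H a0 a r s.

From Stdlib Require Import Reals Lra.
From Coquelicot Require Import Coquelicot.
Open Scope R_scope.

(* On a ray s = lam r on which r has the constant sign sg, the system reduces to
   a' = r, r' = -(v + 2 c a) r with c = (lam - sg) / 4.  This reduced system has
   the first integral r + v a + c a^2, and comparing its values at -oo and +oo
   gives a0 (v + c a0) = 0.  As a' = r has a sign, a is strictly monotone, so
   a0 <> 0 has the sign of -sg and a0 = -v / c: this is -4v on I1 and 4v on I4,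
   and has the wrong sign on I2 and I3.  Conversely, on the zero level set of the
   first integral a solves the logistic equation a' = -a (v + c a), whose
   solution from a0 to 0 is a0 / (1 + exp (v x)). *)

Definition reduced_system (v c : R) (a r : R -> R) : Prop :=
  forall x, is_derive a x (r x) /\ is_derive r x (- (v + 2 * c * a x) * r x).

Section Ray.

Variables (v lam sg : R) (a r s : R -> R).
Hypothesis s_on_ray : forall x, s x = lam * r x.
Hypothesis abs_r : forall x, Rabs (r x) = sg * r x.

Let r_equation x :
  - v * r x - s x * a x / 2 + a x * Rabs (r x) / 2
  = - (v + 2 * ((lam - sg) / 4) * a x) * r x.
Proof. rewrite s_on_ray, abs_r; field. Qed.

Lemma reduced_system_of_solution :
  is_solution v a r s -> reduced_system v ((lam - sg) / 4) a r.
Proof.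
  intros Hsol x; destruct (Hsol x) as (Da & Dr & _).
  split; [exact Da | rewrite <- r_equation; exact Dr].
Qed.

(* [(lam - sg) lam = 2] makes the s-equation [lam] times the r-equation, i.e. the
   ray invariant; its four solutions are the rays I1, ..., I4. *)
Lemma solution_of_reduced_system :
  (lam - sg) * lam = 2 ->
  reduced_system v ((lam - sg) / 4) a r -> is_solution v a r s.
Proof.
  intros Hlam Hred x; destruct (Hred x) as [Da Dr].
  split; [exact Da | split; [rewrite r_equation; exact Dr |]].
  apply (is_derive_ext (fun y => lam * r y)); [intros y; now rewrite s_on_ray |].
  replace (- v * s x - r x * a x)
    with (lam * (- (v + 2 * ((lam - sg) / 4) * a x) * r x)).
  - now apply is_derive_scal.
  - rewrite s_on_ray.
    replace (r x * a x) with ((lam - sg) * lam / 2 * r x * a x) at 1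
      by (rewrite Hlam; field).
    field.
Qed.

End Ray.

Lemma reduced_system_opp (v c : R) (a r : R -> R) :
  reduced_system v c a r ->
  reduced_system v (- c) (fun x => - a x) (fun x => - r x).
Proof.
  intros Hred x; destruct (Hred x) as [Da Dr]; split.
  - exact (is_derive_opp a x (r x) Da).
  - replace (- (v + 2 * - c * - a x) * - r x) with (- (- (v + 2 * c * a x) * r x))
      by ring.
    exact (is_derive_opp r x _ Dr).
Qed.

Lemma is_derive_0_constant (F : R -> R) :
  (forall x, is_derive F x 0) -> forall x y, F x = F y.
Proof.
  intros H x y.
  destruct (Rtotal_order x y) as [Hxy | [-> | Hxy]]; [| easy |].
  - apply (eq_is_derive F); [intros t _; apply H | exact Hxy].
  - symmetry; apply (eq_is_derive F); [intros t _; apply H | exact Hxy].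
Qed.

Lemma is_lim_constant_fun (F : R -> R) (x : Rbar) (l : R) :
  (forall y z, F y = F z) -> is_lim F x l -> forall y, F y = l.
Proof.
  intros HF Hl y.
  apply is_lim_unique in Hl.
  rewrite (Lim_ext (fun _ => F y) F x) in Hl by (intros z; apply HF).
  rewrite Lim_const in Hl; now injection Hl.
Qed.

Lemma reduced_first_integral (v c : R) (a r : R -> R) :
  reduced_system v c a r ->
  forall x y, r x + v * a x + c * a x ^ 2 = r y + v * a y + c * a y ^ 2.
Proof.
  intros Hred.
  apply (is_derive_0_constant (fun x => r x + v * a x + c * a x ^ 2)); intros x.
  destruct (Hred x) as [Da Dr].
  replace 0 with (- (v + 2 * c * a x) * r x + v * r x + c * (INR 2 * r x * a x ^ 1))
    by (simpl; ring).
  apply @is_derive_plus; [apply @is_derive_plus |]; auto using is_derive_scal.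
  apply is_derive_scal, (is_derive_pow a 2 x (r x) Da).
Qed.

Lemma is_lim_first_integral (v c : R) (a r : R -> R) (x : Rbar) (A : R) :
  is_lim a x A -> is_lim r x 0 ->
  is_lim (fun y => r y + v * a y + c * a y ^ 2) x (v * A + c * A ^ 2).
Proof.
  intros Ha Hr.
  assert (Ha2 : is_lim (fun y => a y ^ 2) x (A ^ 2))
    by exact (is_lim_comp_continuous a (fun t => t ^ 2) x A Ha
                (continuous_mult _ _ _ (continuous_id _)
                   (continuous_mult _ _ _ (continuous_id _) (continuous_const _ _)))).
  eapply is_lim_plus; [eapply is_lim_plus; [exact Hr | apply is_lim_scal_l, Ha | easy]
                      | apply is_lim_scal_l, Ha2 |].
  simpl; rewrite Rplus_0_l; easy.
Qed.

Lemma reduced_endpoint_relation (v c a0 : R) (a r : R -> R) :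
  reduced_system v c a r ->
  is_lim a m_infty a0 -> is_lim r m_infty 0 ->
  is_lim a p_infty 0 -> is_lim r p_infty 0 ->
  a0 * (v + c * a0) = 0.
Proof.
  intros Hred Ham Hrm Hap Hrp.
  pose proof (reduced_first_integral v c a r Hred) as Hconst.
  pose proof (is_lim_constant_fun _ _ _ Hconst (is_lim_first_integral v c a r _ _ Ham Hrm) 0)
    as Em.
  pose proof (is_lim_constant_fun _ _ _ Hconst (is_lim_first_integral v c a r _ _ Hap Hrp) 0)
    as Ep.
  cbv beta in Em, Ep.
  replace (a0 * (v + c * a0)) with (v * a0 + c * a0 ^ 2) by ring.
  rewrite <- Em, Ep; ring.
Qed.

Lemma lim_m_infty_neg_of_increasing (a r : R -> R) (a0 : R) :
  (forall x, is_derive a x (r x)) -> (forall x, 0 < r x) ->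
  is_lim a m_infty a0 -> is_lim a p_infty 0 -> a0 < 0.
Proof.
  intros Da Hr Ham Hap.
  assert (Hincr : forall x y, x < y -> a x < a y)
    by (intros x y Hxy; apply (incr_function a m_infty p_infty r);
        intros; solve [easy | apply Hr | apply Da]).
  assert (H0 : Rbar_le a0 (a 0)).
  { apply (is_lim_le_loc a (fun _ => a 0) m_infty); [| exact Ham | apply is_lim_const].
    exists 0; intros y Hy; left; now apply Hincr. }
  assert (H1 : Rbar_le (a 1) 0).
  { apply (is_lim_le_loc (fun _ => a 1) a p_infty); [| apply is_lim_const | exact Hap].
    exists 1; intros y Hy; left; now apply Hincr. }
  simpl in H0, H1; pose proof (Hincr 0 1 Rlt_0_1); lra.
Qed.

Lemma reduced_endpoint_pos (v c a0 : R) (a r : R -> R) :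
  reduced_system v c a r -> (forall x, 0 < r x) ->
  is_lim a m_infty a0 -> is_lim r m_infty 0 ->
  is_lim a p_infty 0 -> is_lim r p_infty 0 ->
  v + c * a0 = 0 /\ a0 < 0.
Proof.
  intros Hred Hr Ham Hrm Hap Hrp.
  assert (Hneg : a0 < 0)
    by (apply (lim_m_infty_neg_of_increasing a r); auto; intros x; apply Hred).
  pose proof (reduced_endpoint_relation v c a0 a r Hred Ham Hrm Hap Hrp) as E.
  split; [| exact Hneg].
  destruct (Rmult_integral _ _ E); [lra | easy].
Qed.

Lemma reduced_endpoint_neg (v c a0 : R) (a r : R -> R) :
  reduced_system v c a r -> (forall x, r x < 0) ->
  is_lim a m_infty a0 -> is_lim r m_infty 0 ->
  is_lim a p_infty 0 -> is_lim r p_infty 0 ->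
  v + c * a0 = 0 /\ 0 < a0.
Proof.
  intros Hred Hr Ham Hrm Hap Hrp.
  destruct (reduced_endpoint_pos v (- c) (- a0) _ _ (reduced_system_opp v c a r Hred))
    as [E Hpos].
  - intros x; specialize (Hr x); lra.
  - exact (is_lim_opp a m_infty a0 Ham).
  - rewrite <- Ropp_0; exact (is_lim_opp r m_infty 0 Hrm).
  - rewrite <- Ropp_0; exact (is_lim_opp a p_infty 0 Hap).
  - rewrite <- Ropp_0; exact (is_lim_opp r p_infty 0 Hrp).
  - split; lra.
Qed.

Definition logistic (v a0 x : R) : R := a0 / (1 + exp (v * x)).

Definition logistic_rate (v c a0 x : R) : R :=
  - (v + c * logistic v a0 x) * logistic v a0 x.

Section Logistic.

Variables (v c a0 : R).
Hypothesis v_pos : 0 < v.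
Hypothesis level_zero : v + c * a0 = 0.

Lemma logistic_reduced : reduced_system v c (logistic v a0) (logistic_rate v c a0).
Proof.
  intros x; unfold logistic_rate, logistic.
  pose proof (exp_pos (v * x)).
  split; auto_derive; try lra;
    generalize dependent (exp (v * x)); intros E HE;
    replace v with (- (c * a0)) by lra; field; lra.
Qed.

Lemma logistic_rate_eq x :
  logistic_rate v c a0 x = - (v * exp (v * x) / (1 + exp (v * x)) ^ 2) * a0.
Proof.
  unfold logistic_rate, logistic; pose proof (exp_pos (v * x)).
  generalize dependent (exp (v * x)); intros E HE.
  replace v with (- (c * a0)) by lra; field; lra.
Qed.

Lemma is_lim_logistic_m : is_lim (logistic v a0) m_infty a0.
Proof.
  assert (Hexp : is_lim (fun x => exp (v * x)) m_infty 0).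
  { apply (is_lim_comp exp (fun x => v * x) m_infty 0 m_infty is_lim_exp_m);
      [| exists 0; easy].
    pose proof (is_lim_scal_l (fun x => x) v m_infty m_infty (is_lim_id _)) as H.
    now rewrite (is_Rbar_mult_unique _ _ _
                  (is_Rbar_mult_sym _ _ _ (is_Rbar_mult_m_infty_pos v v_pos))) in H. }
  replace (Finite a0) with (Finite (a0 / (1 + 0))) by (f_equal; field).
  apply (is_lim_comp_continuous _ (fun t => a0 / (1 + t)) _ _ Hexp).
  apply (ex_derive_continuous (fun t => a0 / (1 + t))); auto_derive; lra.
Qed.

Lemma is_lim_logistic_p : is_lim (logistic v a0) p_infty 0.
Proof.
  assert (Hexp : is_lim (fun x => 1 + exp (v * x)) p_infty p_infty).
  { apply (is_lim_plus _ _ _ 1 p_infty); [apply is_lim_const | | easy].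
    apply (is_lim_comp exp (fun x => v * x) p_infty p_infty p_infty is_lim_exp_p);
      [| exists 0; easy].
    pose proof (is_lim_scal_l (fun x => x) v p_infty p_infty (is_lim_id _)) as H.
    now rewrite (is_Rbar_mult_unique _ _ _
                  (is_Rbar_mult_sym _ _ _ (is_Rbar_mult_p_infty_pos v v_pos))) in H. }
  replace (Finite 0) with (Rbar_div a0 p_infty) by (simpl; f_equal; ring).
  apply (is_lim_div (fun _ => a0)); [apply is_lim_const | exact Hexp | easy | easy].
Qed.

Lemma is_lim_logistic_rate (x : Rbar) (L : R) :
  is_lim (logistic v a0) x L -> is_lim (logistic_rate v c a0) x (- (v + c * L) * L).
Proof.
  intros HL.
  apply (is_lim_comp_continuous _ (fun t => - (v + c * t) * t) _ _ HL).
  apply (ex_derive_continuous (fun t => - (v + c * t) * t)); auto_derive; easy.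
Qed.

End Logistic.

Lemma admits_solution_endpoint_pos (v lam a0 : R) (I : R -> R -> R -> Prop) :
  (forall a r s, I a r s -> 0 < r /\ s = lam * r) ->
  admits_solution v I a0 -> v + (lam - 1) / 4 * a0 = 0 /\ a0 < 0.
Proof.
  intros Hray (a & r & s & Hsol & Hin & Ham & Hrm & _ & Hap & Hrp & _).
  assert (Hr : forall x, 0 < r x /\ s x = lam * r x) by (intros x; exact (Hray _ _ _ (Hin x))).
  apply (reduced_endpoint_pos v _ a0 a r); try easy; [| intros x; apply Hr].
  apply (reduced_system_of_solution v lam 1 a r s); try easy.
  - intros x; apply Hr.
  - intros x; rewrite Rmult_1_l; apply Rabs_pos_eq, Rlt_le, Hr.
Qed.

Lemma admits_solution_endpoint_neg (v lam a0 : R) (I : R -> R -> R -> Prop) :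
  (forall a r s, I a r s -> r < 0 /\ s = lam * r) ->
  admits_solution v I a0 -> v + (lam + 1) / 4 * a0 = 0 /\ 0 < a0.
Proof.
  intros Hray (a & r & s & Hsol & Hin & Ham & Hrm & _ & Hap & Hrp & _).
  assert (Hr : forall x, r x < 0 /\ s x = lam * r x) by (intros x; exact (Hray _ _ _ (Hin x))).
  apply (reduced_endpoint_neg v _ a0 a r); try easy; [| intros x; apply Hr].
  replace ((lam + 1) / 4) with ((lam - (-1)) / 4) by field.
  apply (reduced_system_of_solution v lam (-1) a r s); try easy.
  - intros x; apply Hr.
  - intros x; rewrite Rabs_left by apply Hr; lra.
Qed.

Lemma admits_solution_of_reduced (v lam sg a0 : R) (I : R -> R -> R -> Prop) (a r : R -> R) :
  (lam - sg) * lam = 2 -> reduced_system v ((lam - sg) / 4) a r ->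
  (forall x, Rabs (r x) = sg * r x /\ I (a x) (r x) (lam * r x)) ->
  is_lim a m_infty a0 -> is_lim r m_infty 0 ->
  is_lim a p_infty 0 -> is_lim r p_infty 0 ->
  admits_solution v I a0.
Proof.
  intros Hlam Hred Hr Ham Hrm Hap Hrp.
  assert (Hs : forall x, is_lim r x 0 -> is_lim (fun y => lam * r y) x 0).
  { intros x Hx; pose proof (is_lim_scal_l r lam x 0 Hx) as H; simpl in H.
    now rewrite Rmult_0_r in H. }
  exists a, r, (fun x => lam * r x); split; [| split].
  - apply (solution_of_reduced_system v lam sg); auto; intros x; apply Hr.
  - intros x; apply Hr.
  - repeat split; auto.
Qed.

Lemma admits_solution_logistic_pos (v lam a0 : R) (I : R -> R -> R -> Prop) :
  0 < v -> (lam - 1) * lam = 2 -> v + (lam - 1) / 4 * a0 = 0 -> a0 < 0 ->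
  (forall a r, 0 < r -> I a r (lam * r)) -> admits_solution v I a0.
Proof.
  intros Hv Hlam Hlevel Ha0 HI.
  set (c := (lam - 1) / 4) in Hlevel.
  assert (Hr : forall x, 0 < logistic_rate v c a0 x).
  { intros x; rewrite (logistic_rate_eq _ _ _ Hlevel).
    assert (0 < v * exp (v * x) / (1 + exp (v * x)) ^ 2)
      by (pose proof (exp_pos (v * x)); apply Rdiv_lt_0_compat; nra).
    nra. }
  pose proof (is_lim_logistic_rate v c a0 _ _ (is_lim_logistic_m v a0 Hv)) as Hrm.
  pose proof (is_lim_logistic_rate v c a0 _ _ (is_lim_logistic_p v a0 Hv)) as Hrp.
  rewrite Hlevel, Ropp_0, Rmult_0_l in Hrm; rewrite Rmult_0_r in Hrp.
  apply (admits_solution_of_reduced v lam 1 a0 I (logistic v a0) (logistic_rate v c a0));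
    auto using logistic_reduced, is_lim_logistic_m, is_lim_logistic_p.
  intros x; split; [rewrite Rmult_1_l; apply Rabs_pos_eq, Rlt_le, Hr | apply HI, Hr].
Qed.

Lemma admits_solution_logistic_neg (v lam a0 : R) (I : R -> R -> R -> Prop) :
  0 < v -> (lam + 1) * lam = 2 -> v + (lam + 1) / 4 * a0 = 0 -> 0 < a0 ->
  (forall a r, r < 0 -> I a r (lam * r)) -> admits_solution v I a0.
Proof.
  intros Hv Hlam Hlevel Ha0 HI.
  set (c := (lam - (-1)) / 4).
  assert (Hc : v + c * a0 = 0) by (unfold c; lra).
  assert (Hr : forall x, logistic_rate v c a0 x < 0).
  { intros x; rewrite (logistic_rate_eq _ _ _ Hc).
    assert (0 < v * exp (v * x) / (1 + exp (v * x)) ^ 2)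
      by (pose proof (exp_pos (v * x)); apply Rdiv_lt_0_compat; nra).
    nra. }
  pose proof (is_lim_logistic_rate v c a0 _ _ (is_lim_logistic_m v a0 Hv)) as Hrm.
  pose proof (is_lim_logistic_rate v c a0 _ _ (is_lim_logistic_p v a0 Hv)) as Hrp.
  rewrite Hc, Ropp_0, Rmult_0_l in Hrm; rewrite Rmult_0_r in Hrp.
  apply (admits_solution_of_reduced v lam (-1) a0 I (logistic v a0) (logistic_rate v c a0));
    auto using logistic_reduced, is_lim_logistic_m, is_lim_logistic_p.
  - unfold c; lra.
  - intros x; split; [rewrite Rabs_left by apply Hr; ring | apply HI, Hr].
Qed.

Theorem lemma6 (v : R) (hv : 0 < v) :
  (forall a0 : R, admits_solution v I1 a0 <-> a0 = - 4 * v) /\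
  (forall a0 : R, admits_solution v I4 a0 <-> a0 = 4 * v) /\
  (forall a0 : R, ~ admits_solution v I2 a0 /\ ~ admits_solution v I3 a0).
Proof.
  split; [| split]; intros a0; [split | split | split].
  - intros H; destruct (admits_solution_endpoint_pos v 2 a0 I1) as [E _];
      [intros ? ? ? [? ->]; now split | exact H | lra].
  - intros ->; apply (admits_solution_logistic_pos v 2); try lra.
    now intros ? ? ?; split.
  - intros H; destruct (admits_solution_endpoint_neg v (-2) a0 I4) as [E _];
      [intros ? ? ? [? ->]; split; [easy | ring] | exact H | lra].
  - intros ->; apply (admits_solution_logistic_neg v (-2)); try lra.
    intros ? ? ?; split; [easy | ring].
  - intros H; destruct (admits_solution_endpoint_pos v (-1) a0 I2) as [E Hneg];
      [intros ? ? ? [? ->]; split; [easy | ring] | exact H | lra].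
  - intros H; destruct (admits_solution_endpoint_neg v 1 a0 I3) as [E Hpos];
      [intros ? ? ? [? ->]; split; [easy | ring] | exact H | lra].
Qed.
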